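(* Let $n\ge 3$. The square of the cycle, $C_n^2$, is odd prime if and only if $n\not\equiv 2 \pmod 3$.
   Context: All graphs are finite and simple. A graph $G$ of order $N$ is odd prime if there is a bijection $\ell:V(G)\to\{1,3,\ldots,2N-1\}$ with $\gcd(\ell(u),\ell(v))=1$ for every edge $uv$. For a graph $G$ and $k\ge 1$, the power $G^k$ has vertex set $V(G)$, with $u\ne v$ adjacent iff their distance in $G$ is at most $k$. $C_n$ is the cycle on $n$ vertices. *)

From mathcomp Require Import all_boot.
Set Implicit Arguments. Unset Strict Implicit. Unset Printing Implicit Defensive.

(* A finite simple graph: vertex type T : finType, adjacency e : rel T,
   assumed symmetric and irreflexive where relevant. *)

Definition walk_le (T : finType) (e : rel T) (k : nat) (u v : T) : Prop :=
  exists p : seq T, size p <= k /\ path e u p /\ last u p = v.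

Definition graph_power (T : finType) (e : rel T) (k : nat) (u v : T) : Prop :=
  u <> v /\ walk_le e k u v.

Definition cycle_adj (n : nat) : rel 'I_n :=
  fun i j => (j == (i.+1 %% n) :> nat) || (i == (j.+1 %% n) :> nat).

(* Odd prime labeling: bijection l : V -> {1,3,...,2N-1}, coprime on edges. *)
Definition odd_prime (T : finType) (adj : T -> T -> Prop) : Prop :=
  exists l : T -> nat,
    injective l /\
    (forall x, odd (l x) /\ l x < 2 * #|T|) /\
    (forall u v, adj u v -> coprime (l u) (l v)).

(* Labelling vertex i by 2i+1 works: neighbours in C_n^2 get labels differing
   by 2 or 4, except across the wrap-around, where the only pair without the
   label 1 is {2n-1, 3}, coprime exactly when n is not 2 mod 3.  Conversely, if
   n = 3m+2 then the m+1 odd multiples of 3 below 2n label pairwise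
   non-adjacent vertices, i.e. vertices at cyclic distance at least 3; the
   translates of such a set by 0, 1 and 2 are disjoint, so it has at most
   n/3 < m+1 elements. *)
From mathcomp Require Import all_boot ssralg zmodp zify.

Set Implicit Arguments.
Unset Strict Implicit.
Unset Printing Implicit Defensive.

Import GRing.Theory.

Lemma coprime_odd_addX2 a k : odd a -> coprime a (a + 2 ^ k).
Proof.
by move=> odd_a; rewrite /coprime gcdnDl -/(coprime a _) coprimeXr // coprimen2.
Qed.

Lemma odd_labelling_onto (T : finType) (l : T -> nat) :
  injective l -> (forall x, odd (l x) /\ l x < 2 * #|T|) ->
  forall k, odd k -> k < 2 * #|T| -> k \in codom l.
Proof.
move=> l_inj l_odd k odd_k lt_k.
pose odds := [seq i.*2.+1 | i <- iota 0 #|T|].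
have sub_odds : {subset codom l <= odds}.
  move=> _ /codomP[x ->]; have [odd_lx lt_lx] := l_odd x.
  apply/mapP; exists (l x)./2; first by rewrite mem_iota; lia.
  by rewrite -[LHS]odd_double_half odd_lx.
have uniq_codom : uniq (codom l) by rewrite map_inj_uniq ?enum_uniq.
have codom_odds : codom l =i odds.
  apply: (uniq_min_size uniq_codom sub_odds _).2.
  by rewrite size_codom size_map size_iota.
rewrite codom_odds; apply/mapP; exists k./2; first by rewrite mem_iota; lia.
by rewrite -[LHS]odd_double_half odd_k.
Qed.

Lemma odd_labelling_card_dvd3 (T : finType) (l : T -> nat) m :
  injective l -> (forall x, odd (l x) /\ l x < 2 * #|T|) -> 3 * m + 2 <= #|T| ->
  m.+1 <= #|[set x | 3 %| l x]|.
Proof.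
move=> l_inj l_odd le_mT.
pose mults := [seq 3 * i.*2.+1 | i <- iota 0 m.+1].
have mults_bound i : i < m.+1 -> 3 * i.*2.+1 < 2 * #|T| by lia.
have -> : m.+1 = size mults by rewrite size_map size_iota.
rewrite cardE -(size_map l); apply: uniq_leq_size.
  by rewrite map_inj_uniq ?iota_uniq // => i j /eqP; rewrite eqn_pmul2l //; lia.
move=> y /mapP[i]; rewrite mem_iota => lt_i ->.
have /codomP[x lx] : 3 * i.*2.+1 \in codom l.
  by apply: odd_labelling_onto; rewrite ?oddM /= ?odd_double ?mults_bound.
by rewrite lx map_f // mem_enum inE -lx dvdn_mulr.
Qed.

Lemma coprime_odd_label_shift p u d : u < p -> 0 < d < 3 -> p %% 3 != 2 ->
  coprime (2 * u + 1) (2 * ((u + d) %% p) + 1).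
Proof.
move=> lt_up d_range p_mod3.
have [le_p1 | lt_1p] := leqP p 1.
  by rewrite (_ : u = 0); [exact: coprime1n | lia].
have [lt_udp | le_pud] := ltnP (u + d) p.
  have -> : 2 * ((u + d) %% p) + 1 = 2 * u + 1 + 2 ^ d.
    by rewrite modn_small //; case: d d_range {lt_udp} => [|[|[|]]] //; lia.
  by rewrite coprime_odd_addX2 // addn1 /= oddM.
have -> : (u + d) %% p = u + d - p.
  by rewrite -{1}(subnK le_pud) modnDr modn_small //; lia.
have [-> | ovf1] : u + d - p = 0 \/ u + d - p = 1 by lia.
  by rewrite coprimen1.
rewrite ovf1 coprime_sym prime_coprime //; apply/negP; lia.
Qed.

Lemma cycle_adjE p (u v : 'I_p.+2) :
  cycle_adj u v = (v == u + 1)%R || (u == v + 1)%R.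
Proof. by rewrite /cycle_adj -!val_eqE /= !modnDmr !addn1. Qed.

(* The vertex set 'I_N of C_N is the ring Z/NZ, so that u + d%:R is the
   vertex d steps after u. *)
Section SquareOfCycle.

Variable n : nat.
Local Notation N := n.+3.
Local Notation sq_adj := (graph_power (@cycle_adj N) 2).
Local Open Scope ring_scope.

Lemma val_addZp_nat (u : 'I_N) d : val (u + d%:R) = ((u + d) %% N)%N.
Proof. by rewrite /= Zp_nat /= modnDmr. Qed.

Lemma cycle_sq_adj_shift (u : 'I_N) d : (0 < d < 3)%N -> sq_adj u (u + d%:R).
Proof.
move=> d_range; split.
  rewrite -{1}[u]addr0 => /addrI/(congr1 val).
  by rewrite /= Zp_nat /= modn_small //; lia.
case: d d_range => [|[|[|]]] // _.
  by exists [:: u + 1]; rewrite /= cycle_adjE eqxx.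
by exists [:: u + 1; u + 2]; rewrite /= !cycle_adjE -addrA !eqxx.
Qed.

Lemma cycle_sq_adj_shift_inv (u v : 'I_N) :
  sq_adj u v -> exists2 d, (0 < d < 3)%N & v = u + d%:R \/ u = v + d%:R.
Proof.
case=> neq_uv [p [size_p [uv_path v_last]]].
case: p size_p uv_path v_last => [|a [|w [|//]]] _ /=; first by move=> _ /neq_uv.
  by rewrite andbT cycle_adjE => /orP[]/eqP-> <-; exists 1%N => //; [left | right].
rewrite andbT !cycle_adjE => /andP[/orP[]/eqP ua /orP[]/eqP aw] wv; subst v.
- by exists 2%N => //; left; rewrite aw ua -addrA.
- by case: neq_uv; apply: (addIr 1); rewrite -ua aw.
- by case: neq_uv; rewrite ua aw.
- by exists 2%N => //; right; rewrite ua aw -addrA.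
Qed.

Lemma cycle_sq_indep_card (S : {set 'I_N}) :
  {in S &, forall u v, ~ sq_adj u v} -> (3 * #|S| <= N)%N.
Proof.
move=> S_indep; pose f (p : 'I_3 * 'I_N) := p.2 + p.1%:R.
have f_inj : {in setX setT S &, injective f}.
  move=> [a s] [b t]; rewrite !inE /= => s_S t_S.
  wlog le_ba : a b s t s_S t_S / (b <= a)%N.
    move=> wlog_ab E; case: (leqP b a) => [|/ltnW] le.
      exact: wlog_ab.
    by symmetry; apply: wlog_ab.
  rewrite /f /= => E; have t_shift : t = s + (a - b)%:R.
    by rewrite natrB // addrA E addrK.
  case: (ltngtP a b) le_ba => // [lt_ba _ | eq_ab _].
    case: (S_indep s t s_S t_S); rewrite t_shift; apply: cycle_sq_adj_shift.
    by have := ltn_ord a; lia.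
  by move: t_shift; rewrite eq_ab subnn addr0 => ->; congr pair; apply: val_inj.
have := max_card (f @: setX setT S).
by rewrite card_in_imset // cardsX cardsT !card_ord.
Qed.

End SquareOfCycle.

Theorem theorem5p2 (n : nat) : 3 <= n ->
  (odd_prime (graph_power (@cycle_adj n) 2) <-> n %% 3 != 2).
Proof.
case: n => [|[|[|n]]] // _; split.
- case=> l [l_inj [l_odd l_cop]]; apply/negP => /eqP N_mod3.
  have S_indep :
      {in [set x | 3 %| l x] &, forall u v, ~ graph_power (@cycle_adj n.+3) 2 u v}.
    move=> u v; rewrite !inE => dvd3_u dvd3_v /l_cop cop_uv.
    by have := coprime_dvdr dvd3_v (coprime_dvdl dvd3_u cop_uv).
  set q := n.+3 %/ 3.
  have N_eq : n.+3 = 3 * q + 2 by rewrite {1}(divn_eq n.+3 3) N_mod3 mulnC.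
  have := cycle_sq_indep_card S_indep.
  have := odd_labelling_card_dvd3 (m := q) l_inj l_odd.
  (* The two occurrences of #|S| differ by a coercion; [set] merges them for lia. *)
  rewrite card_ord -N_eq => /(_ (leqnn _)); set k := #|[set x | 3 %| l x]|; lia.
- move=> N_mod3; exists (fun u : 'I_n.+3 => 2 * u + 1); split; [|split].
  + by move=> u v /eqP; rewrite eqn_add2r eqn_pmul2l // => /eqP/val_inj.
  + by move=> u; rewrite card_ord oddD oddM /=; have := ltn_ord u; lia.
  + move=> u v /cycle_sq_adj_shift_inv[d d_range [->|->]]; last rewrite coprime_sym;
      by rewrite val_addZp_nat coprime_odd_label_shift.
Qed.
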